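(* Let the polynomials $\nu_r(x)$ be defined by $\nu_0 = 1$, $\nu_1 = 0$ and $\nu_r(x) = x \sum_{j=0}^{r-2} \binom{r-1}{j} \nu_j(x)$ for $r\ge2$. Then for every integer $m\ge1$ and every real $x \geq 0$, \[ \nu_{2m}(x) \leq m \max\left( e^{m-1} (mx)^m,\ m^{2m-1} x\right). \] *)

From Stdlib Require Import Reals Lra Lia Arith.
Open Scope R_scope.

(* nus n x k = nu_k(x) for all k <= n (values for k > n are irrelevant).
   Built by course-of-values recursion:
   nu_0 = 1, nu_1 = 0, nu_r = x * sum_{j=0}^{r-2} C(r-1,j) nu_j  (r >= 2). *)
Fixpoint nus (n : nat) (x : R) : nat -> R :=
  match n with
  | O => fun _ => 1
  | S n' =>
      let f := nus n' x in
      fun k =>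
        if (k <=? n')%nat then f k
        else match n' with
             | O => 0
             | S n'' => x * sum_f_R0 (fun j => C n' j * f j) n''
             end
  end.

Definition nu (r : nat) (x : R) : R := nus r x r.

Lemma nu_0 x : nu 0 x = 1.
Proof. reflexivity. Qed.
Lemma nu_1 x : nu 1 x = 0.
Proof. reflexivity. Qed.

From Stdlib Require Import Reals Lra Lia Arith.
Open Scope R_scope.

(* The coefficients of [nu_r] count partitions of an r-set into k blocks of
   size at least 2, so they are at most the Stirling numbers [k^r/k!] and vanish
   for [2k > r].  This coefficientwise majorant is proved by induction on [r]:
   it satisfies the recursion of [nu] up to inequality, because
   [sum_j C(r+1,j) k^j = (k+1)^(r+1)].  For [r = 2m] the k-th term is then at
   most [e^(k-1) m^(2m-k) x^k] (using [k^k/k! <= e^(k-1)]), which is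
   log-convex in k, hence maximal at [k = 1] or [k = m]; there are m terms. *)

Lemma nus_nu n k x : (k <= n)%nat -> nus n x k = nu k x.
Proof.
  induction n as [|n IH]; intros Hk.
  - replace k with 0%nat by lia. reflexivity.
  - destruct (Nat.eq_dec k (S n)) as [->|Hne]; [reflexivity|].
    simpl. replace (k <=? n)%nat with true by (symmetry; apply Nat.leb_le; lia).
    apply IH; lia.
Qed.

Lemma nu_SS r x : nu (S (S r)) x = x * sum_f_R0 (fun j => C (S r) j * nu j x) r.
Proof.
  unfold nu at 1.
  change (nus (S (S r)) x (S (S r))) with
    (if (S (S r) <=? S r)%nat then nus (S r) x (S (S r))
     else x * sum_f_R0 (fun j => C (S r) j * nus (S r) x j) r).
  replace (S (S r) <=? S r)%nat with false by (symmetry; apply Nat.leb_gt; lia).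
  f_equal. apply sum_eq; intros j Hj. rewrite nus_nu by lia. reflexivity.
Qed.

Lemma sum_f_R0_swap (f : nat -> nat -> R) N M :
  sum_f_R0 (fun i => sum_f_R0 (fun j => f i j) M) N =
  sum_f_R0 (fun j => sum_f_R0 (fun i => f i j) N) M.
Proof.
  induction N as [|N IH]; [reflexivity|].
  rewrite tech5, IH, <- plus_sum. reflexivity.
Qed.

Lemma C_nonneg n k : 0 <= C n k.
Proof.
  unfold C. apply Rmult_le_pos; [left; apply INR_fact_lt_0|].
  left; apply Rinv_0_lt_compat, Rmult_lt_0_compat; apply INR_fact_lt_0.
Qed.

Lemma sum_binomial_pow (a : R) n : sum_f_R0 (fun j => C n j * a ^ j) n = (a + 1) ^ n.
Proof.
  rewrite binomial. apply sum_eq; intros j _. rewrite pow1. ring.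
Qed.

Definition nu_coef_bound (n k : nat) : R :=
  if (2 * k <=? n)%nat then INR k ^ n / INR (fact k) else 0.

Lemma pow_div_fact_nonneg k n : 0 <= INR k ^ n / INR (fact k).
Proof.
  apply Rmult_le_pos; [apply pow_le, pos_INR|].
  left; apply Rinv_0_lt_compat, INR_fact_lt_0.
Qed.

Lemma nu_coef_bound_nonneg n k : 0 <= nu_coef_bound n k.
Proof.
  unfold nu_coef_bound. destruct (2 * k <=? n)%nat; [apply pow_div_fact_nonneg | lra].
Qed.

Lemma nu_coef_bound_le n k : nu_coef_bound n k <= INR k ^ n / INR (fact k).
Proof.
  unfold nu_coef_bound. destruct (2 * k <=? n)%nat; [lra | apply pow_div_fact_nonneg].
Qed.

Lemma nu_coef_bound_large n k : (n < 2 * k)%nat -> nu_coef_bound n k = 0.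
Proof.
  intros H; unfold nu_coef_bound.
  replace (2 * k <=? n)%nat with false by (symmetry; apply Nat.leb_gt; lia).
  reflexivity.
Qed.

Lemma nu_coef_bound_S_0 n : nu_coef_bound (S n) 0 = 0.
Proof. unfold nu_coef_bound; simpl. field. Qed.

Lemma sum_binomial_nu_coef_bound r k :
  sum_f_R0 (fun j => C (S r) j * nu_coef_bound j k) r <= nu_coef_bound (S (S r)) (S k).
Proof.
  destruct (Nat.le_gt_cases (2 * S k) (S (S r))) as [Hle|Hgt].
  - unfold nu_coef_bound at 2.
    replace (2 * S k <=? S (S r))%nat with true by (symmetry; apply Nat.leb_le; lia).
    assert (Hfact := INR_fact_lt_0 k).
    apply Rle_trans with (sum_f_R0 (fun j => C (S r) j * INR k ^ j) (S r) / INR (fact k)).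
    + unfold Rdiv. rewrite Rmult_comm, scal_sum, tech5.
      apply Rle_trans with (sum_f_R0 (fun j => C (S r) j * INR k ^ j * / INR (fact k)) r).
      * apply sum_Rle; intros j _. rewrite Rmult_assoc.
        apply Rmult_le_compat_l; [apply C_nonneg | apply nu_coef_bound_le].
      * assert (0 <= C (S r) (S r) * INR k ^ S r * / INR (fact k)).
        { rewrite Rmult_assoc. apply Rmult_le_pos; [apply C_nonneg | apply pow_div_fact_nonneg]. }
        lra.
    + rewrite sum_binomial_pow, <- S_INR, fact_simpl, mult_INR.
      right. change (INR (S k) ^ S (S r)) with (INR (S k) * INR (S k) ^ S r). field.
      split; [lra | apply not_0_INR; lia].
  - apply Rle_trans with 0; [|apply nu_coef_bound_nonneg].
    rewrite <- (Rmult_0_l (INR (S r))), <- sum_cte.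
    right. apply sum_eq; intros j Hj. rewrite nu_coef_bound_large by lia. ring.
Qed.

Definition nu_majorant (K n : nat) (x : R) : R :=
  sum_f_R0 (fun k => nu_coef_bound n k * x ^ k) K.

Lemma nu_majorant_nonneg K n x : 0 <= x -> 0 <= nu_majorant K n x.
Proof.
  intros Hx. apply cond_pos_sum; intros k.
  apply Rmult_le_pos; [apply nu_coef_bound_nonneg | apply pow_le; exact Hx].
Qed.

Lemma nu_majorant_S K n x : (n < 2 * S K)%nat -> nu_majorant (S K) n x = nu_majorant K n x.
Proof.
  intros H. unfold nu_majorant. rewrite tech5, nu_coef_bound_large by lia. ring.
Qed.

Lemma nu_majorant_SS K r x : 0 <= x ->
  x * sum_f_R0 (fun j => C (S r) j * nu_majorant K j x) r <= nu_majorant (S K) (S (S r)) x.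
Proof.
  intros Hx.
  assert (Hswap : x * sum_f_R0 (fun j => C (S r) j * nu_majorant K j x) r =
    sum_f_R0 (fun k => sum_f_R0 (fun j => C (S r) j * nu_coef_bound j k) r * x ^ S k) K).
  { rewrite scal_sum. unfold nu_majorant.
    transitivity (sum_f_R0 (fun j => sum_f_R0
      (fun k => C (S r) j * nu_coef_bound j k * x ^ S k) K) r).
    - apply sum_eq; intros j _.
      rewrite Rmult_comm, <- Rmult_assoc, (Rmult_comm x), Rmult_assoc, scal_sum, scal_sum.
      apply sum_eq; intros k _. simpl. ring.
    - rewrite sum_f_R0_swap. apply sum_eq; intros k _.
      rewrite Rmult_comm, scal_sum. apply sum_eq; intros j _. ring. }
  rewrite Hswap. unfold nu_majorant.
  rewrite (decomp_sum _ (S K)) by lia. simpl pred.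
  rewrite nu_coef_bound_S_0, Rmult_0_l, Rplus_0_l.
  apply sum_Rle; intros k _. apply Rmult_le_compat_r; [apply pow_le; exact Hx|].
  apply sum_binomial_nu_coef_bound.
Qed.

Lemma nu_le_majorant K n x : 0 <= x -> (n < 2 * S K)%nat -> nu n x <= nu_majorant K n x.
Proof.
  intros Hx. induction n as [n IH] using lt_wf_ind. intros HnK.
  destruct n as [|[|r]].
  - rewrite nu_0. clear IH HnK. induction K as [|K IHK].
    + unfold nu_majorant, nu_coef_bound; simpl. lra.
    + rewrite nu_majorant_S by lia. exact IHK.
  - rewrite nu_1. apply nu_majorant_nonneg; exact Hx.
  - destruct K as [|K]; [lia|].
    rewrite nu_SS. apply Rle_trans with (x * sum_f_R0 (fun j => C (S r) j * nu_majorant K j x) r).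
    + apply Rmult_le_compat_l; [exact Hx|]. apply sum_Rle; intros j Hj.
      apply Rmult_le_compat_l; [apply C_nonneg|].
      rewrite <- nu_majorant_S by lia. apply IH; lia.
    + apply nu_majorant_SS; exact Hx.
Qed.

Lemma pow_exp t n : exp t ^ n = exp (INR n * t).
Proof.
  induction n as [|n IH]; [simpl; rewrite Rmult_0_l, exp_0; reflexivity|].
  simpl pow. rewrite IH, <- exp_plus, S_INR. f_equal. ring.
Qed.

(* [(1 + 1/n)^n <= e], from [1 + t <= exp t]. *)
Lemma pow_INR_S_le_exp n : INR (S n) ^ n <= exp 1 * INR n ^ n.
Proof.
  destruct n as [|n]; [simpl; assert (H := exp_ineq1_le 1); lra|].
  assert (Ha : 0 < INR (S n)) by (apply lt_0_INR; lia).
  rewrite (S_INR (S n)).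
  replace (INR (S n) + 1) with (INR (S n) * (1 + / INR (S n))) by (field; lra).
  rewrite Rpow_mult_distr, (Rmult_comm (exp 1)).
  apply Rmult_le_compat_l; [apply pow_le; lra|].
  apply Rle_trans with (exp (/ INR (S n)) ^ S n).
  - apply pow_incr. split; [|apply exp_ineq1_le].
    assert (0 < / INR (S n)) by (apply Rinv_0_lt_compat; lra). lra.
  - rewrite pow_exp. right. f_equal. field. lra.
Qed.

Lemma pow_self_le_exp_fact k : INR (S k) ^ S k <= exp 1 ^ k * INR (fact (S k)).
Proof.
  induction k as [|k IH]; [simpl; lra|].
  assert (Hk : 0 <= INR (S (S k))) by apply pos_INR.
  assert (He : 0 <= exp 1) by (left; apply exp_pos).
  change (INR (S (S k)) ^ S (S k)) with (INR (S (S k)) * INR (S (S k)) ^ S k).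
  rewrite fact_simpl, mult_INR.
  apply Rle_trans with (INR (S (S k)) * (exp 1 * INR (S k) ^ S k)).
  - apply Rmult_le_compat_l; [exact Hk | apply pow_INR_S_le_exp].
  - apply Rle_trans with (INR (S (S k)) * (exp 1 * (exp 1 ^ k * INR (fact (S k))))).
    + apply Rmult_le_compat_l; [exact Hk|]. apply Rmult_le_compat_l; [exact He | exact IH].
    + right. simpl. ring.
Qed.

(* The left side is log-convex in k, so it is maximal at [k = m] or [k = 1]. *)
Lemma pow_mul_pow_le_max (a b : R) (k m : nat) : 0 <= a -> 0 <= b -> (1 <= k <= m)%nat ->
  a ^ (2 * m - k) * b ^ k <= Rmax (a ^ m * b ^ m) (a ^ (2 * m - 1) * b).
Proof.
  intros Ha Hb Hk.
  destruct (Rle_lt_dec b a) as [Hba|Hab].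
  - apply Rle_trans with (2 := Rmax_r _ _).
    replace (2 * m - 1)%nat with (2 * m - k + (k - 1))%nat by lia.
    assert (Hbk : b ^ k = b ^ (k - 1) * b)
      by (destruct k as [|k]; [lia|]; simpl; rewrite Nat.sub_0_r; ring).
    rewrite Hbk, pow_add.
    assert (H := pow_incr b a (k - 1) (conj Hb Hba)).
    assert (0 <= a ^ (2 * m - k)) by (apply pow_le; exact Ha).
    rewrite <- !Rmult_assoc.
    apply Rmult_le_compat_r; [exact Hb|]. apply Rmult_le_compat_l; assumption.
  - apply Rle_trans with (2 := Rmax_l _ _).
    replace (2 * m - k)%nat with (m + (m - k))%nat by lia.
    assert (Hbm : b ^ m = b ^ (m - k) * b ^ k) by (rewrite <- pow_add; f_equal; lia).
    rewrite Hbm, pow_add, !Rmult_assoc.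
    assert (H := pow_incr a b (m - k) (conj Ha (Rlt_le _ _ Hab))).
    apply Rmult_le_compat_l; [apply pow_le; exact Ha|].
    apply Rmult_le_compat_r; [apply pow_le; exact Hb | exact H].
Qed.

Lemma nu_coef_bound_le_exp_pow m k : (1 <= k <= m)%nat ->
  nu_coef_bound (2 * m) k <= exp 1 ^ (k - 1) * INR m ^ (2 * m - k).
Proof.
  intros Hk. destruct k as [|k]; [lia|]. rewrite Nat.sub_succ, Nat.sub_0_r.
  apply Rle_trans with (1 := nu_coef_bound_le _ _).
  assert (Hfact := INR_fact_lt_0 (S k)).
  replace (INR (S k) ^ (2 * m)) with (INR (S k) ^ S k * INR (S k) ^ (2 * m - S k))
    by (rewrite <- pow_add; f_equal; lia).
  apply Rle_trans with (exp 1 ^ k * INR (S k) ^ (2 * m - S k)).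
  - unfold Rdiv. rewrite Rmult_assoc, (Rmult_comm (INR (S k) ^ (2 * m - S k))), <- Rmult_assoc.
    apply Rmult_le_compat_r; [apply pow_le, pos_INR|].
    apply (Rmult_le_reg_r (INR (fact (S k)))); [exact Hfact|].
    rewrite Rmult_assoc, Rinv_l by lra. rewrite Rmult_1_r. apply pow_self_le_exp_fact.
  - apply Rmult_le_compat_l; [apply pow_le; left; apply exp_pos|].
    apply pow_incr. split; [apply pos_INR | apply le_INR; lia].
Qed.

Lemma nu_coef_bound_term_le_max m k x : (1 <= k <= m)%nat -> 0 <= x ->
  nu_coef_bound (2 * m) k * x ^ k <=
  Rmax (exp (INR m - 1) * (INR m * x) ^ m) (INR m ^ (2 * m - 1) * x).
Proof.
  intros Hk Hx.
  assert (He : 0 < exp 1) by apply exp_pos.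
  assert (Hexp_pred : forall n, (1 <= n)%nat -> exp 1 * exp 1 ^ (n - 1) = exp 1 ^ n).
  { intros n Hn. destruct n as [|n]; [lia|]. simpl. rewrite Nat.sub_0_r. reflexivity. }
  apply Rle_trans with (exp 1 ^ (k - 1) * INR m ^ (2 * m - k) * x ^ k).
  { apply Rmult_le_compat_r; [apply pow_le; exact Hx | apply nu_coef_bound_le_exp_pow; exact Hk]. }
  apply (Rmult_le_reg_l (exp 1)); [exact He|].
  rewrite <- RmaxRmult by lra.
  replace (exp (INR m - 1)) with (exp 1 ^ (m - 1))
    by (rewrite pow_exp, minus_INR by lia; f_equal; simpl; ring).
  replace (exp 1 * (exp 1 ^ (k - 1) * INR m ^ (2 * m - k) * x ^ k))
    with (INR m ^ (2 * m - k) * (exp 1 * x) ^ k)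
    by (rewrite Rpow_mult_distr, <- (Hexp_pred k) by lia; ring).
  replace (exp 1 * (exp 1 ^ (m - 1) * (INR m * x) ^ m))
    with (INR m ^ m * (exp 1 * x) ^ m)
    by (rewrite !Rpow_mult_distr, <- (Hexp_pred m) by lia; ring).
  replace (exp 1 * (INR m ^ (2 * m - 1) * x)) with (INR m ^ (2 * m - 1) * (exp 1 * x)) by ring.
  apply pow_mul_pow_le_max; [apply pos_INR | apply Rmult_le_pos; lra | exact Hk].
Qed.

Lemma sum_f_R0_le_mul (t : nat -> R) (M : R) m :
  t 0%nat <= 0 -> (forall k, (1 <= k <= m)%nat -> t k <= M) -> sum_f_R0 t m <= INR m * M.
Proof.
  intros H0 Ht. induction m as [|m IH]; [simpl; lra|].
  rewrite tech5, S_INR.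
  assert (IH' : sum_f_R0 t m <= INR m * M) by (apply IH; intros k Hk; apply Ht; lia).
  assert (t (S m) <= M) by (apply Ht; lia).
  lra.
Qed.

Theorem proposition20 (m : nat) (x : R) :
  (1 <= m)%nat -> 0 <= x ->
  nu (2 * m) x <=
  INR m * Rmax (exp (INR m - 1) * (INR m * x) ^ m) (INR m ^ (2 * m - 1) * x).
Proof.
  intros Hm Hx.
  apply Rle_trans with (nu_majorant m (2 * m) x); [apply nu_le_majorant; [exact Hx | lia]|].
  apply sum_f_R0_le_mul.
  - replace (2 * m)%nat with (S (2 * m - 1)) by lia.
    rewrite nu_coef_bound_S_0. lra.
  - intros k Hk. apply nu_coef_bound_term_le_max; assumption.
Qed.
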